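(* Let $p$ be an admissible linear order on $\mathcal A$ and $I\subset\mathcal A$ an interval with respect to $p$. Let $\mathcal A^*$ be the amalgamation of $\mathcal A$ obtained by shrinking $I$ to a single new letter $z$, declared to belong to $L_e$ and placed in the position of $I$ in the order (all other letters and their order unchanged), and for $w\in\mathcal A^n$ let $w^*\in(\mathcal A^* )^n$ be obtained by replacing every letter of $w$ lying in $I$ by $z$. Then for every $w\in\mathcal A^n$ and every $k\ge1$, $$\sum_{i=1}^k\lambda_i(\phi_p(w))\le\sum_{i=1}^k\lambda_i(\phi_p^*(w^* )),$$ where $\phi_p^*$ is the generalised RSK shape map for the alphabet $\mathcal A^*$ with the induced order and $\lambda_i(\cdot)$ denotes the length of the $i$-th row. In particular, if $\mathcal P^*$ denotes the parameters of $\mathcal A^*$ (with $z$ having mass $\mu_1(I)$), then $\sum_{i=1}^k\lambda_i^{\mathcal P}(n)\le\sum_{i=1}^k\lambda_i^{\mathcal P^*}(n)$ pointwise on $(\mathcal A^n,\mu_n)$.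
   Context: Alphabet: $\mathcal A=L_e\sqcup L_o\sqcup G$ where $L_e=\{x_1,x_2,\dots\}$, $L_o=\{y_1,y_2,\dots\}$ are discrete and $G$ is identified with an interval of $\mathbb R$; $\mu_1$, $\mu_n=\mu_1^{\otimes n}$ are the measures with $\mu_1(\{x_i\})=\alpha_i$, $\mu_1(\{y_j\})=\beta_j$, and $\gamma$ times normalized Lebesgue measure on $G$, for Thoma parameters $\mathcal P$. An admissible order is a linear order $p$ on $\mathcal A$ for which $G$ is an interval (if $a_1<a<a_2$ with $a_1,a_2\in G$ then $a\in G$) and whose restriction to $G$ is the usual order of reals or its reverse. A subset $I\subset\mathcal A$ is an interval w.r.t. $p$ if $a_1,a_2\in I$, $a_1<a<a_2$ imply $a\in I$. Generalised RSK (row insertion) w.r.t. $p$: an $\mathcal A_p$-tableau is a Young diagram filled with letters of $\mathcal A$. To insert a letter $x$ into a tableau $T$: in the first row, if $x\in L_e$ find the leftmost entry strictly greater than $x$; if $x\in L_o\cup G$ find the leftmost entry greater than or equal to $x$; if there is none, append $x$ at the end of the row and stop; otherwise $x$ replaces that entry and the replaced entry is inserted into the second row by the same rule, and so on (an entry bumped out of the last row forms a new row). For $w=z_1\cdots z_n$, $R(w)$ is obtained by inserting $z_1,z_2,\dots,z_n$ successively into the empty tableau, and $\phi_p(w)\in\mathbb Y_n$ is the shape of $R(w)$. $\lambda_i^{\mathcal P}(n)(w):=\lambda_i(\phi_p(w))$. *)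

From Stdlib Require Import Reals List Arith ClassicalEpsilon.
Import ListNotations.
Open Scope R_scope.

Definition decb (P : Prop) : bool :=
  if excluded_middle_informative P then true else false.

(* Le i = x_{i+1}, Lo j = y_{j+1}, Gl r = the point r of G = [0,1]. *)
Inductive letter : Type :=
| Le : nat -> letter
| Lo : nat -> letter
| Gl : {r : R | 0 <= r <= 1} -> letter.

Definition isG (a : letter) : Prop :=
  match a with Gl _ => True | _ => False end.

(* strict-bump letters (those of L_e) *)
Definition isLe (a : letter) : bool :=
  match a with Le _ => true | _ => false end.

(* p a b = true means a < b in the linear order p. *)
Definition strict_linear_order {X : Type} (p : X -> X -> bool) : Prop :=
  (forall a, p a a = false) /\
  (forall a b c, p a b = true -> p b c = true -> p a c = true) /\
  (forall a b, a <> b -> p a b = true \/ p b a = true).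

Definition admissible (p : letter -> letter -> bool) : Prop :=
  strict_linear_order p /\
  (forall a1 a a2, isG a1 -> isG a2 -> p a1 a = true -> p a a2 = true -> isG a) /\
  ((forall r s, p (Gl r) (Gl s) = true <-> proj1_sig r < proj1_sig s) \/
   (forall r s, p (Gl r) (Gl s) = true <-> proj1_sig s < proj1_sig r)).

Definition is_interval {X : Type} (p : X -> X -> bool) (I : X -> bool) : Prop :=
  forall a1 a a2, I a1 = true -> I a2 = true -> p a1 a = true -> p a a2 = true ->
    I a = true.

Section RSK.
Variable X : Type.
Variable lt : X -> X -> bool.
Variable strict : X -> bool.       (* true for letters of L_e *)

Definition bumps (x e : X) : bool :=
  if strict x then lt x e else negb (lt e x).

Fixpoint row_ins (x : X) (r : list X) : option X * list X :=
  match r with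
  | nil => (None, [x])
  | e :: r' =>
      if bumps x e then (Some e, x :: r')
      else let (o, r'') := row_ins x r' in (o, e :: r'')
  end.

Fixpoint tab_ins (x : X) (t : list (list X)) : list (list X) :=
  match t with
  | nil => [[x]]
  | r :: t' =>
      match row_ins x r with
      | (None, r') => r' :: t'
      | (Some y, r') => r' :: tab_ins y t'
      end
  end.

Definition RSK (w : list X) : list (list X) :=
  fold_left (fun t x => tab_ins x t) w nil.

Definition shape (w : list X) : list nat := map (@length X) (RSK w).
End RSK.

Arguments RSK {X} lt strict w.
Arguments shape {X} lt strict w.

(* lambda_1 + ... + lambda_k of a shape (rows beyond the last are 0) *)
Definition partsum (k : nat) (sh : list nat) : nat :=
  fold_right Nat.add 0%nat (firstn k sh).

(* None is the new letter z; Some a is a letter a of A not in I. *)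
Definition star_lt (p : letter -> letter -> bool) (I : letter -> bool)
  (a b : option letter) : bool :=
  match a, b with
  | Some a, Some b => p a b
  | None, None => false
  | None, Some b => decb (exists c, I c = true /\ p c b = true)
  | Some a, None => decb (exists c, I c = true /\ p a c = true)
  end.

Definition star_strict (a : option letter) : bool :=
  match a with None => true | Some a => isLe a end.

Definition star_word (I : letter -> bool) (w : list letter) : list (option letter) :=
  map (fun a => if I a then None else Some a) w.

(* Proof strategy (Greene's theorem).  Over any alphabet with a strict order
   [lt] and a set [strict] of strictly-bumping letters, write [row_le a b] when
   inserting [b] does not bump [a], i.e. [a] may stand left of [b] in a row.
   When [lt] is linear, [row_le] and its negation are both transitive, and that
   is all the RSK theory below uses.
   1. Insertion keeps rows [row_le]-chains and columns strictly decreasing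
      ([tableau_RSK]); the reading word of the insertion tableau is Knuth
      equivalent to the inserted word ([knuth_reading_RSK]).
   2. [greene k w s] ("[k] disjoint [row_le]-chains of [w] cover [s] letters")
      is invariant under Knuth moves ([knuth_greene]).
   3. On the reading word of a tableau the best [s] is the sum of the first [k]
      row lengths: the rows attain it and peeling off the columns, which are
      antichains, bounds it.  This is Greene's theorem ([greene_shape],
      [greene_shape_max]).
   4. A letter map preserving [row_le] sends chains to chains, so it can only
      increase the partial row sums ([partsum_shape_mono]).
   5. The amalgamation [a |-> a*] is such a map into the genuine letters of the
      amalgamated alphabet, on which [star_lt] is a strict linear order; this
      gives [lemma2]. *)

From Stdlib Require Import Reals List Arith ClassicalEpsilon.
From Stdlib Require Import Lia Classical Eqdep_dec Bool.
Import ListNotations.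
Local Open Scope nat_scope.

Section Pairwise.
Variable A : Type.
Implicit Types (P : A -> A -> Prop) (l : list A).

Lemma FOP_cons_iff P a l :
  ForallOrdPairs P (a :: l) <-> (forall b, In b l -> P a b) /\ ForallOrdPairs P l.
Proof.
  split.
  - intros H; inversion H as [|? ? Ha Hl]; subst. rewrite Forall_forall in Ha. auto.
  - intros [Ha Hl]. constructor; auto. apply Forall_forall; auto.
Qed.

Lemma FOP_app P l1 l2 : ForallOrdPairs P (l1 ++ l2) <->
  ForallOrdPairs P l1 /\ ForallOrdPairs P l2 /\ (forall a b, In a l1 -> In b l2 -> P a b).
Proof.
  induction l1 as [|x l1 IH]; simpl.
  - split; [intros H; repeat split; auto; [constructor|tauto] | tauto].
  - rewrite !FOP_cons_iff, IH. split.
    + intros (Hx & H1 & H2 & H3). repeat split; auto.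
      * intros b Hb; apply Hx, in_or_app; auto.
      * intros a b [<-|Ha] Hb; auto. apply Hx, in_or_app; auto.
    + intros ((Hx & H1) & H2 & H3). repeat split; auto.
      intros b Hb; apply in_app_or in Hb as [Hb|Hb]; auto.
Qed.

Lemma FOP_app3 P l1 M l3 : ForallOrdPairs P (l1 ++ M ++ l3) <->
  ForallOrdPairs P l1 /\ ForallOrdPairs P M /\ ForallOrdPairs P l3 /\
  (forall a b, In a l1 -> In b M -> P a b) /\
  (forall a b, In a l1 -> In b l3 -> P a b) /\ (forall a b, In a M -> In b l3 -> P a b).
Proof.
  rewrite !FOP_app. split.
  - intros (H1 & (H2 & H3 & H4) & H5). repeat split; auto;
    intros a b Ha Hb; apply H5; auto; apply in_or_app; auto.
  - intros (H1 & H2 & H3 & H4 & H5 & H6). repeat split; auto.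
    intros a b Ha Hb; apply in_app_or in Hb as [Hb|Hb]; auto.
Qed.

Lemma FOP_triple P x y z : ForallOrdPairs P [x; y; z] <-> P x y /\ P x z /\ P y z.
Proof.
  rewrite !FOP_cons_iff. simpl. split.
  - intros (H1 & H2 & _). repeat split; [apply H1|apply H1|apply H2]; auto.
  - intros (H1 & H2 & H3). repeat split; try constructor; intros b Hb;
    repeat destruct Hb as [<-|Hb]; tauto.
Qed.

Lemma FOP_combine P Q (S : A -> A -> Prop) l : (forall a b, P a b -> Q a b -> S a b) ->
  ForallOrdPairs P l -> ForallOrdPairs Q l -> ForallOrdPairs S l.
Proof.
  intros H. induction 1 as [|a l H1 H2 IH]; intros HQ; constructor; inversion HQ; subst; auto.
  rewrite Forall_forall in *. auto.
Qed.

Inductive subseq : list A -> list A -> Prop :=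
| subseq_nil : subseq [] []
| subseq_skip a l l' : subseq l l' -> subseq l (a :: l')
| subseq_keep a l l' : subseq l l' -> subseq (a :: l) (a :: l').

Lemma subseq_refl l : subseq l l.
Proof. induction l; [constructor|apply subseq_keep; auto]. Qed.

Lemma subseq_nil_l l : subseq [] l.
Proof. induction l; constructor; auto. Qed.

Lemma subseq_incl l l' : subseq l l' -> incl l l'.
Proof. induction 1; intros x Hx; simpl in *; auto. destruct Hx; auto. Qed.

Lemma subseq_app l1 l1' l2 l2' : subseq l1 l1' -> subseq l2 l2' -> subseq (l1 ++ l2) (l1' ++ l2').
Proof. induction 1; intros; simpl; auto; [apply subseq_skip|apply subseq_keep]; auto. Qed.

Lemma subseq_FOP P l l' : subseq l l' -> ForallOrdPairs P l' -> ForallOrdPairs P l.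
Proof.
  induction 1 as [|a l l' Hs IH|a l l' Hs IH]; intros Hp; auto.
  - inversion Hp; auto.
  - rewrite FOP_cons_iff in *. destruct Hp as [Ha Hl]. split; auto.
    intros b Hb; apply Ha; eapply subseq_incl; eauto.
Qed.
End Pairwise.
Arguments subseq {A}.

Lemma FOP_map A B (P : A -> A -> Prop) (Q : B -> B -> Prop) (f : A -> B) l :
  (forall a b, P a b -> Q (f a) (f b)) -> ForallOrdPairs P l -> ForallOrdPairs Q (map f l).
Proof.
  intros H. induction 1 as [|a l Ha Hl IH]; simpl; constructor; auto.
  apply Forall_map. eapply Forall_impl; [|exact Ha]. auto.
Qed.

Lemma FOP_map_inv A B (P : B -> B -> Prop) (f : A -> B) l :
  ForallOrdPairs P (map f l) -> ForallOrdPairs (fun a b => P (f a) (f b)) l.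
Proof.
  induction l as [|a l IH]; simpl; intros H; constructor; inversion H as [|? ? H1 H2]; subst; auto.
  rewrite Forall_forall in *. intros b Hb. apply H1, in_map; auto.
Qed.

Lemma concat_rev_cons A (x : list A) L : concat (rev (x :: L)) = concat (rev L) ++ x.
Proof. simpl. rewrite concat_app; simpl. rewrite app_nil_r; auto. Qed.

Lemma map_concat_rev A B (f : A -> B) L : map f (concat (rev L)) = concat (rev (map (map f) L)).
Proof. induction L as [|x L IH]; auto. rewrite map_cons, !concat_rev_cons, map_app, IH. auto. Qed.

Lemma subseq_concat_rev A (f : list A -> list A) (H : forall l, subseq (f l) l) L :
  subseq (concat (rev (map f L))) (concat (rev L)).
Proof.
  induction L as [|x L IH]; [constructor|].
  rewrite map_cons, !concat_rev_cons. apply subseq_app; auto.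
Qed.

Lemma subseq_tl A (l : list A) : subseq (tl l) l.
Proof. destruct l; simpl; [constructor|apply subseq_skip, subseq_refl]. Qed.

Lemma subseq_firstn1 A (l : list A) : subseq (firstn 1 l) l.
Proof. destruct l; simpl; [constructor|apply subseq_keep, subseq_nil_l]. Qed.

Lemma partsum_cons m x l : partsum (S m) (x :: l) = x + partsum m l.
Proof. reflexivity. Qed.

Lemma partsum_nil m : partsum m [] = 0.
Proof. destruct m; reflexivity. Qed.

Lemma partsum_zeros (l : list nat) m : Forall (fun x => x = 0) l -> partsum m l = 0.
Proof.
  intros H. revert m. induction H as [|x l Hx H IH]; intros m; [apply partsum_nil|].
  destruct m; [reflexivity|]. rewrite partsum_cons, IH. lia.
Qed.

Lemma partsum_add A (f g : A -> nat) m t :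
  partsum m (map (fun r => f r + g r) t) = partsum m (map f t) + partsum m (map g t).
Proof.
  revert m; induction t as [|r t IH]; intros [|m]; simpl; rewrite ?partsum_nil; auto.
  rewrite !partsum_cons, IH. lia.
Qed.

Section GeneralisedRSK.
Variable X : Type.
Variable lt : X -> X -> bool.
Variable strict : X -> bool.

(* [row_le a b]: inserting [b] does not bump [a], i.e. [a] may stand to the left
   of [b] in a row.  Rows of an RSK tableau are chains for this relation and
   columns are chains for its negation. *)
Definition row_le (a b : X) : Prop := bumps X lt strict b a = false.

Lemma row_le_dec a b : row_le a b \/ ~ row_le a b.
Proof. unfold row_le. destruct (bumps X lt strict b a); [right; discriminate|left; auto]. Qed.

Lemma not_row_le_bumps a b : ~ row_le a b <-> bumps X lt strict b a = true.
Proof. unfold row_le. destruct (bumps X lt strict b a); intuition congruence. Qed.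

(* The transitivity of [row_le] and of its negation, valid whenever [lt] is a
   strict linear order, is all the RSK theory below needs. *)
Hypothesis row_le_trans : forall a b c, row_le a b -> row_le b c -> row_le a c.
Hypothesis not_row_le_trans : forall a b c, ~ row_le a b -> ~ row_le b c -> ~ row_le a c.

Lemma row_le_of_not_right x a c : row_le x c -> ~ row_le a c -> row_le x a.
Proof.
  intros H1 H2. destruct (row_le_dec x a) as [|H]; auto.
  exfalso; exact (not_row_le_trans x a c H H2 H1).
Qed.

Lemma row_le_of_not_left a c d : ~ row_le a c -> row_le a d -> row_le c d.
Proof.
  intros H1 H2. destruct (row_le_dec c d) as [|H]; auto.
  exfalso; exact (not_row_le_trans a c d H1 H H2).
Qed.

Definition is_row : list X -> Prop := ForallOrdPairs row_le.

Lemma row_ins_bumped x r y r' : row_ins X lt strict x r = (Some y, r') ->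
  exists u v, r = u ++ y :: v /\ r' = u ++ x :: v /\
              (forall e, In e u -> row_le e x) /\ ~ row_le y x.
Proof.
  revert r'; induction r as [|e r IH]; simpl; intros r' H; [discriminate|].
  destruct (bumps X lt strict x e) eqn:E.
  - injection H as <- <-. exists [], r. repeat split; auto; [simpl; tauto|].
    apply not_row_le_bumps; auto.
  - destruct (row_ins X lt strict x r) as [o r''] eqn:E2. injection H as -> <-.
    destruct (IH _ eq_refl) as (u & v & -> & -> & H1 & H2).
    exists (e :: u), v. repeat split; auto. intros e' [<-|He]; auto.
Qed.

Lemma row_ins_appended x r r' : row_ins X lt strict x r = (None, r') ->
  r' = r ++ [x] /\ forall e, In e r -> row_le e x.
Proof.
  revert r'; induction r as [|e r IH]; simpl; intros r' H.
  - injection H as <-. split; auto. tauto.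
  - destruct (bumps X lt strict x e) eqn:E; [discriminate|].
    destruct (row_ins X lt strict x r) as [o r''] eqn:E2. injection H as -> <-.
    destruct (IH _ eq_refl) as [-> H1]. split; auto. intros e' [<-|He]; auto.
Qed.

Lemma row_ins_is_row x r o r' : is_row r -> row_ins X lt strict x r = (o, r') -> is_row r'.
Proof.
  unfold is_row. intros Hc H. destruct o as [y|].
  - destruct (row_ins_bumped _ _ _ _ H) as (u & v & -> & -> & H1 & H2).
    apply (FOP_app3 _ _ u [y] v) in Hc as (A1 & _ & A3 & _ & A5 & A6).
    apply (FOP_app3 _ _ u [x] v). repeat split; auto.
    + constructor; constructor.
    + intros a b Ha [<-|[]]; auto.
    + intros a b [<-|[]] Hb. eapply row_le_of_not_left; eauto. apply (A6 y b); simpl; auto.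
  - destruct (row_ins_appended _ _ _ H) as [-> H1].
    apply FOP_app. repeat split; auto; [constructor; constructor|].
    intros a b Ha [<-|[]]; auto.
Qed.

Fixpoint strictly_below (l u : list X) : Prop :=
  match l, u with
  | [], _ => True
  | a :: l', b :: u' => ~ row_le a b /\ strictly_below l' u'
  | _ :: _, [] => False
  end.

Definition first_row (t : list (list X)) : list X := match t with [] => [] | r :: _ => r end.

Fixpoint tableau (t : list (list X)) : Prop :=
  match t with
  | [] => True
  | r :: t' => is_row r /\ strictly_below (first_row t') r /\ tableau t'
  end.

Lemma strictly_below_snoc l u x : strictly_below l u -> strictly_below l (u ++ [x]).
Proof.
  revert u; induction l as [|a l IH]; intros [|b u]; simpl; try tauto.
  intros [H1 H2]; auto.
Qed.

Lemma strictly_below_bumped l u x y u' : strictly_below l u ->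
  row_ins X lt strict x u = (Some y, u') -> strictly_below l u'.
Proof.
  intros Hb H. destruct (row_ins_bumped _ _ _ _ H) as (p & v & -> & -> & H1 & H2).
  clear H. revert l Hb; induction p as [|e p IH]; intros [|a l]; simpl; auto.
  - intros [H3 H4]; split; auto. intros H5; eapply not_row_le_trans; eauto.
  - intros [H3 H4]; split; auto. apply IH; auto. intros; apply H1; simpl; auto.
Qed.

(* The entry bumped out of row [u] lands in the row below at a position under
   the new row [u'], so the column condition survives insertion. *)
Lemma strictly_below_row_ins u l x y u' : is_row u -> strictly_below l u ->
  row_ins X lt strict x u = (Some y, u') ->
  strictly_below (snd (row_ins X lt strict y l)) u'.
Proof.
  revert l x y u'; induction u as [|e u IH]; intros l x y u' Hc Hb H; simpl in H; [discriminate|].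
  destruct (bumps X lt strict x e) eqn:E.
  - injection H as <- <-. destruct l as [|f l]; simpl.
    + split; auto. apply not_row_le_bumps; auto.
    + simpl in Hb. destruct Hb as [Hb1 Hb2]. apply not_row_le_bumps in Hb1. rewrite Hb1. simpl.
      split; auto. apply not_row_le_bumps; auto.
  - destruct (row_ins X lt strict x u) as [o r''] eqn:E2. injection H as -> <-.
    apply FOP_cons_iff in Hc as [Hc1 Hc2].
    destruct (row_ins_bumped _ _ _ _ E2) as (u1 & v1 & Hu & _ & _ & Hyx).
    assert (Hey : ~ row_le y e).
    { intros Hye. apply Hyx. eapply row_le_trans; eauto. }
    assert (Hy : In y u) by (rewrite Hu; apply in_or_app; simpl; auto).
    destruct l as [|f l]; simpl; [split; auto|].
    simpl in Hb; destruct Hb as [Hb1 Hb2].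
    destruct (bumps X lt strict y f) eqn:E3; simpl.
    + split; auto. eapply strictly_below_bumped; eauto.
    + destruct (row_ins X lt strict y l) as [o' l'] eqn:E4. simpl. split; auto.
      replace l' with (snd (row_ins X lt strict y l)) by (rewrite E4; auto).
      eapply IH; eauto.
Qed.

Lemma first_row_tab_ins y t :
  first_row (tab_ins X lt strict y t) = snd (row_ins X lt strict y (first_row t)).
Proof.
  destruct t as [|r t]; simpl; auto.
  destruct (row_ins X lt strict y r) as [[z|] r']; auto.
Qed.

Lemma tableau_tab_ins x t : tableau t -> tableau (tab_ins X lt strict x t).
Proof.
  revert x; induction t as [|r t IH]; intros x Hv; simpl.
  - repeat split; auto. constructor; constructor.
  - destruct Hv as (H1 & H2 & H3).
    destruct (row_ins X lt strict x r) as [[y|] r'] eqn:E; simpl; repeat split; auto.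
    + eapply row_ins_is_row; eauto.
    + rewrite first_row_tab_ins. eapply strictly_below_row_ins; eauto.
    + eapply row_ins_is_row; eauto.
    + destruct (row_ins_appended _ _ _ E) as [-> _]. apply strictly_below_snoc; auto.
Qed.

Lemma tableau_fold w t :
  tableau t -> tableau (fold_left (fun t x => tab_ins X lt strict x t) w t).
Proof.
  revert t; induction w as [|x w IH]; simpl; auto. intros t Ht. apply IH, tableau_tab_ins; auto.
Qed.

Lemma tableau_RSK w : tableau (RSK lt strict w).
Proof. apply tableau_fold. exact I. Qed.

Inductive knuth : list X -> list X -> Prop :=
| knuth_refl w : knuth w w
| knuth_move1 u v a b c : row_le a b -> ~ row_le a c ->
    knuth (u ++ a :: b :: c :: v) (u ++ a :: c :: b :: v)
| knuth_move2 u v a b c : row_le a c -> ~ row_le b c ->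
    knuth (u ++ a :: b :: c :: v) (u ++ b :: a :: c :: v)
| knuth_sym w w' : knuth w w' -> knuth w' w
| knuth_trans w1 w2 w3 : knuth w1 w2 -> knuth w2 w3 -> knuth w1 w3.

Lemma knuth_ctx p q w w' : knuth w w' -> knuth (p ++ w ++ q) (p ++ w' ++ q).
Proof.
  induction 1; try (econstructor; eauto; fail).
  - rewrite !app_assoc, <- !(app_assoc (p ++ u)). simpl. apply knuth_move1; auto.
  - rewrite !app_assoc, <- !(app_assoc (p ++ u)). simpl. apply knuth_move2; auto.
Qed.

Lemma knuth_prefix p w w' : knuth w w' -> knuth (p ++ w) (p ++ w').
Proof. intros H. assert (H1 := knuth_ctx p [] _ _ H). rewrite !app_nil_r in H1. auto. Qed.

Lemma knuth_suffix q w w' : knuth w w' -> knuth (w ++ q) (w' ++ q).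
Proof. exact (knuth_ctx [] q w w'). Qed.

Lemma knuth_sink x : forall v a, is_row (a :: v) -> ~ row_le a x ->
  knuth ((a :: v) ++ [x]) (a :: x :: v).
Proof.
  induction v as [|b v IH]; intros a Hc Hax; simpl; [apply knuth_refl|].
  apply FOP_cons_iff in Hc as [Hc1 Hc2].
  assert (Hab : row_le a b) by (apply Hc1; simpl; auto).
  assert (Hbx : ~ row_le b x) by (intros H; apply Hax; eapply row_le_trans; eauto).
  eapply knuth_trans; [exact (knuth_prefix [a] _ _ (IH b Hc2 Hbx))|].
  apply (knuth_move1 [] v a b x); auto.
Qed.

Lemma knuth_rise y : forall u c v, is_row (u ++ [y]) -> (forall e, In e u -> row_le e c) ->
  ~ row_le y c -> knuth (u ++ y :: c :: v) (y :: u ++ c :: v).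
Proof.
  induction u as [|e u IH] using rev_ind; intros c v Hc H1 H2; simpl; [apply knuth_refl|].
  rewrite <- app_assoc in Hc |- *. simpl.
  apply (FOP_app3 _ _ u [e] [y]) in Hc as (A1 & _ & _ & A4 & A5 & A6).
  assert (Hec : row_le e c) by (apply H1; apply in_or_app; simpl; auto).
  eapply knuth_trans; [apply (knuth_move2 u v e y c); auto|].
  rewrite <- app_assoc. simpl. apply IH.
  - apply FOP_app. repeat split; auto; repeat constructor.
  - intros e' He'. apply A4; simpl; auto.
  - intros Hye. apply H2. eapply row_le_trans; eauto.
Qed.

Lemma knuth_row_ins x r y r' : is_row r -> row_ins X lt strict x r = (Some y, r') ->
  knuth (r ++ [x]) (y :: r').
Proof.
  intros Hc H. destruct (row_ins_bumped _ _ _ _ H) as (u & v & -> & -> & H1 & H2).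
  apply (FOP_app3 _ _ u [y] v) in Hc as (A1 & _ & A3 & A4 & A5 & A6).
  rewrite <- app_assoc. eapply knuth_trans.
  - apply (knuth_prefix u). apply knuth_sink; auto.
    apply FOP_cons_iff. split; auto. intros b Hb; apply (A6 y b); simpl; auto.
  - apply knuth_rise; auto. apply FOP_app. repeat split; auto; repeat constructor.
Qed.

(* The reading word: rows read from the bottom row to the top row. *)
Definition reading (t : list (list X)) : list X := concat (rev t).

Lemma reading_cons r t : reading (r :: t) = reading t ++ r.
Proof. apply concat_rev_cons. Qed.

Lemma knuth_tab_ins x t : tableau t ->
  knuth (reading (tab_ins X lt strict x t)) (reading t ++ [x]).
Proof.
  revert x; induction t as [|r t IH]; intros x Hv; simpl; [apply knuth_refl|].
  destruct Hv as (H1 & H2 & H3).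
  destruct (row_ins X lt strict x r) as [[y|] r'] eqn:E; rewrite !reading_cons.
  - eapply knuth_trans; [apply (knuth_suffix r' _ _ (IH y H3))|].
    rewrite <- !app_assoc. apply knuth_prefix, knuth_sym, knuth_row_ins; auto.
  - destruct (row_ins_appended _ _ _ E) as [-> _]. rewrite app_assoc. apply knuth_refl.
Qed.

Lemma knuth_fold w t : tableau t ->
  knuth (reading (fold_left (fun t x => tab_ins X lt strict x t) w t)) (reading t ++ w).
Proof.
  revert t; induction w as [|x w IH]; intros t Ht; simpl.
  - rewrite app_nil_r; apply knuth_refl.
  - eapply knuth_trans; [apply IH, tableau_tab_ins; auto|].
    replace (reading t ++ x :: w) with ((reading t ++ [x]) ++ w) by (rewrite <- app_assoc; auto).
    apply knuth_suffix, knuth_tab_ins; auto.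
Qed.

Lemma knuth_reading_RSK w : knuth (reading (RSK lt strict w)) w.
Proof. exact (knuth_fold w [] I). Qed.

Variable k : nat.

(* A labelled word selects [k] disjoint subsequences: label [0] means "not
   selected" and the labels [1..k] name the subsequence an entry belongs to. *)
Definition same_chain (p q : X * nat) : Prop :=
  snd p = snd q -> snd p <> 0 -> row_le (fst p) (fst q).

Definition chain_family (lw : list (X * nat)) : Prop :=
  ForallOrdPairs same_chain lw /\ Forall (fun p => snd p <= k) lw.

Definition selected (lw : list (X * nat)) : nat :=
  length (filter (fun p => negb (snd p =? 0)) lw).

(* [greene w s]: the word [w] contains [k] disjoint [row_le]-chains with at
   least [s] letters in total.  This is the quantity preserved by Knuth moves. *)
Definition greene (w : list X) (s : nat) : Prop :=
  exists lw, map fst lw = w /\ chain_family lw /\ s <= selected lw.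

Lemma selected_app l1 l2 : selected (l1 ++ l2) = selected l1 + selected l2.
Proof. unfold selected. rewrite filter_app, length_app. auto. Qed.

Definition cross (l1 l2 : list (X * nat)) : Prop :=
  forall p q, In p l1 -> In q l2 -> same_chain p q.

Lemma chain_family_app3 lu M lv : chain_family (lu ++ M ++ lv) <->
  chain_family lu /\ chain_family M /\ chain_family lv /\
  cross lu M /\ cross lu lv /\ cross M lv.
Proof. unfold chain_family, cross. rewrite FOP_app3, !Forall_app. tauto. Qed.

Lemma chain_family_triple p q r : chain_family [p; q; r] <->
  (same_chain p q /\ same_chain p r /\ same_chain q r) /\
  (snd p <= k /\ snd q <= k /\ snd r <= k).
Proof.
  unfold chain_family. rewrite FOP_triple, !Forall_cons_iff.
  split; [tauto|intros ((H1 & H2 & H3) & H4 & H5 & H6); repeat split; auto].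
Qed.

Lemma greene_intro lu M lv u v s : map fst lu = u -> map fst lv = v ->
  chain_family (lu ++ M ++ lv) -> s <= selected (lu ++ M ++ lv) ->
  greene (u ++ map fst M ++ v) s.
Proof. intros <- <- H1 H2. exists (lu ++ M ++ lv). rewrite !map_app. auto. Qed.

Lemma split_triple (lw : list (X * nat)) u a b c v : map fst lw = u ++ a :: b :: c :: v ->
  exists lu la lb lc lv, lw = lu ++ [(a,la);(b,lb);(c,lc)] ++ lv /\
    map fst lu = u /\ map fst lv = v.
Proof.
  intros H. apply map_eq_app in H as (lu & l2 & -> & H1 & H2).
  apply map_eq_cons in H2 as ([a' la] & l3 & -> & Ha & H3). simpl in Ha; subst.
  apply map_eq_cons in H3 as ([b' lb] & l4 & -> & Hb & H4). simpl in Hb; subst.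
  apply map_eq_cons in H4 as ([c' lc] & lv & -> & Hc & H5). simpl in Hc; subst.
  exists lu, la, lb, lc, lv. auto.
Qed.

Lemma greene_reorder lu M M' lv u v s : map fst lu = u -> map fst lv = v ->
  chain_family (lu ++ M ++ lv) -> s <= selected (lu ++ M ++ lv) ->
  ForallOrdPairs same_chain M' -> incl M' M -> selected M' = selected M ->
  greene (u ++ map fst M' ++ v) s.
Proof.
  intros Hu Hv Hg Hs HM' Hinc Hsel. apply (greene_intro lu M' lv); auto.
  - apply chain_family_app3 in Hg as (G1 & [_ G2] & G3 & G4 & G5 & G6).
    apply chain_family_app3. refine (conj G1 (conj (conj HM' _) (conj G3 (conj _ (conj G5 _))))).
    + rewrite Forall_forall in *. auto.
    + intros p q Hp Hq. apply G4; auto.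
    + intros p q Hp Hq. apply G6; auto.
  - rewrite !selected_app in *. lia.
Qed.

(* Exchanging the labels [s] and [t] in a suffix exchanges the tails of two
   chains; this is the only relabelling the Knuth moves require. *)
Definition swap_label (s t n : nat) : nat := if n =? s then t else if n =? t then s else n.

Definition swap_labels (s t : nat) (lv : list (X * nat)) : list (X * nat) :=
  map (fun q => (fst q, swap_label s t (snd q))) lv.

Lemma swap_label_cases s t n :
  (n = s /\ swap_label s t n = t) \/ (n = t /\ n <> s /\ swap_label s t n = s) \/
  (n <> s /\ n <> t /\ swap_label s t n = n).
Proof.
  unfold swap_label. destruct (n =? s) eqn:E1, (n =? t) eqn:E2;
  rewrite ?Nat.eqb_eq, ?Nat.eqb_neq in *; lia.
Qed.

Lemma in_swap_labels s t q' lv : In q' (swap_labels s t lv) ->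
  exists q, In q lv /\ q' = (fst q, swap_label s t (snd q)).
Proof. unfold swap_labels. intros H. apply in_map_iff in H as (q & <- & Hq). eauto. Qed.

Lemma chain_family_swap s t lv : s <> 0 -> t <> 0 -> s <= k -> t <= k ->
  chain_family lv -> chain_family (swap_labels s t lv).
Proof.
  intros Hs Ht Hsk Htk [H1 H2]. split.
  - eapply FOP_map; [|exact H1]. unfold same_chain; simpl. intros [a m] [b n] H E N; simpl in *.
    destruct (swap_label_cases s t m) as [(-> & E1)|[(-> & ? & E1)|(? & ? & E1)]];
    destruct (swap_label_cases s t n) as [(-> & E2)|[(-> & ? & E2)|(? & ? & E2)]];
    apply H; lia.
  - apply Forall_map. eapply Forall_impl; [|exact H2]. intros [a n] Hn; simpl in *.
    destruct (swap_label_cases s t n) as [(_ & ->)|[(_ & _ & ->)|(_ & _ & ->)]]; lia.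
Qed.

Lemma selected_swap s t lv : s <> 0 -> t <> 0 -> selected (swap_labels s t lv) = selected lv.
Proof.
  intros Hs Ht. unfold selected, swap_labels. rewrite filter_map_swap, length_map.
  f_equal. apply filter_ext. intros [a n]; simpl.
  destruct (swap_label_cases s t n) as [(-> & ->)|[(-> & _ & ->)|(_ & _ & ->)]]; auto.
  all: destruct (s =? 0) eqn:E1, (t =? 0) eqn:E2; rewrite ?Nat.eqb_eq in *; simpl; auto; lia.
Qed.

(* The four relabellings below re-route chains through a Knuth move when both
   moved letters used to lie on selected chains.  Each keeps the number of
   selected letters. *)

(* [a c b ~> a b c]: the chain through [c b] is re-routed through [a b], [c]
   is dropped and [a] is picked up. *)
Lemma relabel_move1_drop lu lv a b c t : row_le a b -> ~ row_le a c -> t <> 0 ->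
  chain_family (lu ++ [(a,0);(c,t);(b,t)] ++ lv) ->
  chain_family (lu ++ [(a,t);(b,t);(c,0)] ++ lv).
Proof.
  intros Hab Hac Ht Hg.
  apply chain_family_app3 in Hg as (Gu & GM & Gv & Cum & Cuv & CMv).
  apply chain_family_triple in GM as (_ & Bnd); simpl in Bnd.
  apply chain_family_app3. refine (conj Gu (conj _ (conj Gv (conj _ (conj Cuv _))))).
  - apply chain_family_triple. unfold same_chain; simpl. repeat split; intros; auto; lia.
  - intros [x l] q Hx Hq.
    assert (Xc := Cum (x,l) (c,t) Hx ltac:(simpl; auto)).
    assert (Xb := Cum (x,l) (b,t) Hx ltac:(simpl; auto)).
    unfold same_chain in *; simpl in *.
    destruct Hq as [<-|[<-|[<-|[]]]]; simpl; intros E N; try lia.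
    + eapply row_le_of_not_right; eauto.
    + auto.
  - intros p [y m] Hp Hy.
    assert (By := CMv (b,t) (y,m) ltac:(simpl; auto) Hy).
    unfold same_chain in *; simpl in *.
    destruct Hp as [<-|[<-|[<-|[]]]]; simpl; intros E N; try lia.
    + eapply row_le_trans; eauto.
    + auto.
Qed.

(* [a c b ~> a b c] with [a] on chain [s] and [c b] on chain [t]: the new
   chain [s] continues with [b] and the old tail of [t], the new chain [t]
   continues with [c] and the old tail of [s]. *)
Lemma relabel_move1_swap lu lv a b c s t :
  row_le a b -> ~ row_le a c -> s <> 0 -> t <> 0 -> s <> t ->
  chain_family (lu ++ [(a,s);(c,t);(b,t)] ++ lv) ->
  chain_family (lu ++ [(a,s);(b,s);(c,t)] ++ swap_labels t s lv).
Proof.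
  intros Hab Hac Hs Ht Hst Hg.
  apply chain_family_app3 in Hg as (Gu & GM & Gv & Cum & Cuv & CMv).
  apply chain_family_triple in GM as (_ & Bnd); simpl in Bnd.
  apply chain_family_app3. refine (conj Gu (conj _ (conj _ (conj _ (conj _ _))))).
  - apply chain_family_triple. unfold same_chain; simpl. repeat split; intros; auto; lia.
  - apply chain_family_swap; auto; lia.
  - intros [x l] q Hx Hq.
    assert (Xa := Cum (x,l) (a,s) Hx ltac:(simpl; auto)).
    assert (Xc := Cum (x,l) (c,t) Hx ltac:(simpl; auto)).
    unfold same_chain in *; simpl in *.
    destruct Hq as [<-|[<-|[<-|[]]]]; simpl; intros E N; auto.
    eapply row_le_trans; eauto.
  - intros [x l] q Hx Hq. apply in_swap_labels in Hq as ([y m] & Hy & ->).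
    assert (Xa := Cum (x,l) (a,s) Hx ltac:(simpl; auto)).
    assert (Xc := Cum (x,l) (c,t) Hx ltac:(simpl; auto)).
    assert (Ay := CMv (a,s) (y,m) ltac:(simpl; auto) Hy).
    assert (By := CMv (b,t) (y,m) ltac:(simpl; auto) Hy).
    assert (Xy := Cuv (x,l) (y,m) Hx Hy).
    unfold same_chain in *; simpl in *. intros E N.
    destruct (swap_label_cases t s m) as [(-> & E1)|[(-> & _ & E1)|(_ & _ & E1)]];
    rewrite E1 in E; subst l; auto.
    + apply (row_le_trans x a y); auto. apply (row_le_trans a b y); auto.
    + apply (row_le_trans x c y); auto. apply (row_le_of_not_left a c y); auto.
  - intros p q Hp Hq. apply in_swap_labels in Hq as ([y m] & Hy & ->).
    assert (Ay := CMv (a,s) (y,m) ltac:(simpl; auto) Hy).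
    assert (By := CMv (b,t) (y,m) ltac:(simpl; auto) Hy).
    unfold same_chain in *; simpl in *.
    destruct (swap_label_cases t s m) as [(-> & ->)|[(-> & _ & ->)|(? & ? & ->)]];
    destruct Hp as [<-|[<-|[<-|[]]]]; simpl; intros E N; try lia; auto.
    + apply (row_le_trans a b y); auto.
    + apply (row_le_of_not_left a c y); auto.
Qed.

(* [a b c ~> b a c]: the chain through [a b] is re-routed through [a c]. *)
Lemma relabel_move2_drop lu lv a b c t : row_le a c -> ~ row_le b c -> t <> 0 ->
  chain_family (lu ++ [(a,t);(b,t);(c,0)] ++ lv) ->
  chain_family (lu ++ [(b,0);(a,t);(c,t)] ++ lv).
Proof.
  intros Hac Hbc Ht Hg.
  apply chain_family_app3 in Hg as (Gu & GM & Gv & Cum & Cuv & CMv).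
  apply chain_family_triple in GM as (_ & Bnd); simpl in Bnd.
  apply chain_family_app3. refine (conj Gu (conj _ (conj Gv (conj _ (conj Cuv _))))).
  - apply chain_family_triple. unfold same_chain; simpl. repeat split; intros; auto; lia.
  - intros [x l] q Hx Hq.
    assert (Xa := Cum (x,l) (a,t) Hx ltac:(simpl; auto)).
    unfold same_chain in *; simpl in *.
    destruct Hq as [<-|[<-|[<-|[]]]]; simpl; intros E N; try lia; auto.
    eapply row_le_trans; eauto.
  - intros p [y m] Hp Hy.
    assert (Ay := CMv (a,t) (y,m) ltac:(simpl; auto) Hy).
    assert (By := CMv (b,t) (y,m) ltac:(simpl; auto) Hy).
    unfold same_chain in *; simpl in *.
    destruct Hp as [<-|[<-|[<-|[]]]]; simpl; intros E N; try lia; auto.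
    apply (row_le_of_not_left b c y); auto.
Qed.

(* [a b c ~> b a c] with [a b] on chain [t] and [c] on chain [s]: the new
   chain [t] continues with [c] and the old tail of [s], the new chain [s]
   continues with [b] and the old tail of [t]. *)
Lemma relabel_move2_swap lu lv a b c s t :
  row_le a c -> ~ row_le b c -> s <> 0 -> t <> 0 -> s <> t ->
  chain_family (lu ++ [(a,t);(b,t);(c,s)] ++ lv) ->
  chain_family (lu ++ [(b,s);(a,t);(c,t)] ++ swap_labels t s lv).
Proof.
  intros Hac Hbc Hs Ht Hst Hg.
  apply chain_family_app3 in Hg as (Gu & GM & Gv & Cum & Cuv & CMv).
  apply chain_family_triple in GM as (_ & Bnd); simpl in Bnd.
  apply chain_family_app3. refine (conj Gu (conj _ (conj _ (conj _ (conj _ _))))).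
  - apply chain_family_triple. unfold same_chain; simpl. repeat split; intros; auto; lia.
  - apply chain_family_swap; auto; lia.
  - intros [x l] q Hx Hq.
    assert (Xa := Cum (x,l) (a,t) Hx ltac:(simpl; auto)).
    assert (Xc := Cum (x,l) (c,s) Hx ltac:(simpl; auto)).
    unfold same_chain in *; simpl in *.
    destruct Hq as [<-|[<-|[<-|[]]]]; simpl; intros E N; auto.
    + apply (row_le_of_not_right x b c); auto.
    + apply (row_le_trans x a c); auto.
  - intros [x l] q Hx Hq. apply in_swap_labels in Hq as ([y m] & Hy & ->).
    assert (Xa := Cum (x,l) (a,t) Hx ltac:(simpl; auto)).
    assert (Xc := Cum (x,l) (c,s) Hx ltac:(simpl; auto)).
    assert (By := CMv (b,t) (y,m) ltac:(simpl; auto) Hy).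
    assert (Cy := CMv (c,s) (y,m) ltac:(simpl; auto) Hy).
    assert (Xy := Cuv (x,l) (y,m) Hx Hy).
    unfold same_chain in *; simpl in *. intros E N.
    destruct (swap_label_cases t s m) as [(-> & E1)|[(-> & _ & E1)|(_ & _ & E1)]];
    rewrite E1 in E; subst l; auto.
    + apply (row_le_trans x b y); auto. apply (row_le_of_not_right x b c); auto.
    + apply (row_le_trans x a y); auto. apply (row_le_trans a c y); auto.
  - intros p q Hp Hq. apply in_swap_labels in Hq as ([y m] & Hy & ->).
    assert (By := CMv (b,t) (y,m) ltac:(simpl; auto) Hy).
    assert (Cy := CMv (c,s) (y,m) ltac:(simpl; auto) Hy).
    unfold same_chain in *; simpl in *.
    destruct (swap_label_cases t s m) as [(-> & ->)|[(-> & _ & ->)|(? & ? & ->)]];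
    destruct Hp as [<-|[<-|[<-|[]]]]; simpl; intros E N; try lia; auto.
    apply (row_le_trans a c y); auto.
Qed.

Definition label_weight (n : nat) : nat := if n =? 0 then 0 else 1.

Lemma label_weight_nonzero n : n <> 0 -> label_weight n = 1.
Proof. intros H. unfold label_weight. apply Nat.eqb_neq in H. rewrite H. reflexivity. Qed.

Lemma selected_triple (a b c : X) (la lb lc : nat) :
  selected [(a,la);(b,lb);(c,lc)] = label_weight la + label_weight lb + label_weight lc.
Proof. unfold selected, label_weight. simpl. destruct (la =? 0), (lb =? 0), (lc =? 0); reflexivity. Qed.

(* Moving
   letters that do not share a chain only requires reordering; otherwise the
   chains are re-routed by one of the relabellings above. *)
Lemma greene_move1_fwd u v a b c s : row_le a b -> ~ row_le a c ->
  greene (u ++ a :: b :: c :: v) s -> greene (u ++ a :: c :: b :: v) s.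
Proof.
  intros Hab Hac (lw & Hm & Hg & Hs).
  destruct (split_triple _ _ _ _ _ _ Hm) as (lu & la & lb & lc & lv & -> & Hu & Hv).
  pose proof (proj1 (chain_family_app3 _ _ _) Hg) as (_ & GM & _).
  apply chain_family_triple in GM as ((Pab & Pac & Pbc) & _).
  apply (greene_reorder lu [(a,la);(b,lb);(c,lc)] [(a,la);(c,lc);(b,lb)] lv); auto.
  - apply FOP_triple. unfold same_chain in *; simpl in *. repeat split; auto.
    intros E N. exfalso. apply Hac, (row_le_trans a b c); [exact Hab|apply Pbc; lia].
  - intros q Hq; simpl in *; tauto.
  - rewrite !selected_triple. lia.
Qed.

Lemma greene_move2_back u v a b c s : row_le a c -> ~ row_le b c ->
  greene (u ++ b :: a :: c :: v) s -> greene (u ++ a :: b :: c :: v) s.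
Proof.
  intros Hac Hbc (lw & Hm & Hg & Hs).
  destruct (split_triple _ _ _ _ _ _ Hm) as (lu & lb & la & lc & lv & -> & Hu & Hv).
  pose proof (proj1 (chain_family_app3 _ _ _) Hg) as (_ & GM & _).
  apply chain_family_triple in GM as ((Pba & Pbc & Pac) & _).
  apply (greene_reorder lu [(b,lb);(a,la);(c,lc)] [(a,la);(b,lb);(c,lc)] lv); auto.
  - apply FOP_triple. unfold same_chain in *; simpl in *. repeat split; auto.
    intros E N. exfalso. apply Hbc, (row_le_trans b a c); [apply Pba; lia|exact Hac].
  - intros q Hq; simpl in *; tauto.
  - rewrite !selected_triple. lia.
Qed.

Lemma greene_move1_back u v a b c s : row_le a b -> ~ row_le a c ->
  greene (u ++ a :: c :: b :: v) s -> greene (u ++ a :: b :: c :: v) s.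
Proof.
  intros Hab Hac (lw & Hm & Hg & Hs).
  destruct (split_triple _ _ _ _ _ _ Hm) as (lu & la & lc & lb & lv & -> & Hu & Hv).
  pose proof (proj1 (chain_family_app3 _ _ _) Hg) as (_ & GM & _).
  apply chain_family_triple in GM as ((Pac & Pab & Pcb) & _).
  unfold same_chain in Pac, Pab, Pcb; simpl in Pac, Pab, Pcb.
  rewrite !selected_app, selected_triple in Hs.
  destruct (classic (lc = lb /\ lc <> 0)) as [[<- Nt]|Keep].
  - destruct (Nat.eq_dec la 0) as [->|Na].
    + apply (greene_intro lu [(a,lc);(b,lc);(c,0)] lv); auto.
      * apply relabel_move1_drop; auto.
      * rewrite !selected_app, selected_triple. change (label_weight 0) with 0 in *. lia.
    + assert (la <> lc) by (intros E; apply Hac, Pac; auto).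
      apply (greene_intro lu [(a,la);(b,la);(c,lc)] (swap_labels lc la lv)); auto.
      * unfold swap_labels. rewrite map_map. exact Hv.
      * apply relabel_move1_swap; auto.
      * rewrite !selected_app, selected_swap, selected_triple by auto.
        rewrite (label_weight_nonzero la), (label_weight_nonzero lc) in * by auto. lia.
  - apply (greene_reorder lu [(a,la);(c,lc);(b,lb)] [(a,la);(b,lb);(c,lc)] lv); auto.
    + rewrite !selected_app, selected_triple. exact Hs.
    + apply FOP_triple. unfold same_chain; simpl. repeat split; auto.
      intros E N. exfalso. apply Keep. split; lia.
    + intros q Hq; simpl in *; tauto.
    + rewrite !selected_triple. lia.
Qed.

Lemma greene_move2_fwd u v a b c s : row_le a c -> ~ row_le b c ->
  greene (u ++ a :: b :: c :: v) s -> greene (u ++ b :: a :: c :: v) s.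
Proof.
  intros Hac Hbc (lw & Hm & Hg & Hs).
  destruct (split_triple _ _ _ _ _ _ Hm) as (lu & la & lb & lc & lv & -> & Hu & Hv).
  pose proof (proj1 (chain_family_app3 _ _ _) Hg) as (_ & GM & _).
  apply chain_family_triple in GM as ((Pab & Pac & Pbc) & _).
  unfold same_chain in Pab, Pac, Pbc; simpl in Pab, Pac, Pbc.
  rewrite !selected_app, selected_triple in Hs.
  destruct (classic (la = lb /\ la <> 0)) as [[<- Nt]|Keep].
  - destruct (Nat.eq_dec lc 0) as [->|Nc].
    + apply (greene_intro lu [(b,0);(a,la);(c,la)] lv); auto.
      * apply relabel_move2_drop; auto.
      * rewrite !selected_app, selected_triple. change (label_weight 0) with 0 in *. lia.
    + assert (lc <> la) by (intros E; apply Hbc, Pbc; auto).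
      apply (greene_intro lu [(b,lc);(a,la);(c,la)] (swap_labels la lc lv)); auto.
      * unfold swap_labels. rewrite map_map. exact Hv.
      * apply relabel_move2_swap; auto.
      * rewrite !selected_app, selected_swap, selected_triple by auto.
        rewrite (label_weight_nonzero la), (label_weight_nonzero lc) in * by auto. lia.
  - apply (greene_reorder lu [(a,la);(b,lb);(c,lc)] [(b,lb);(a,la);(c,lc)] lv); auto.
    + rewrite !selected_app, selected_triple. exact Hs.
    + apply FOP_triple. unfold same_chain; simpl. repeat split; auto.
      intros E N. exfalso. apply Keep. split; lia.
    + intros q Hq; simpl in *; tauto.
    + rewrite !selected_triple. lia.
Qed.

Lemma knuth_greene w w' : knuth w w' -> forall s, greene w s <-> greene w' s.
Proof.
  induction 1 as [w|u v a b c H1 H2|u v a b c H1 H2|w w' _ IH|w1 w2 w3 _ IH1 _ IH2];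
  intros s.
  - tauto.
  - split; [apply greene_move1_fwd|apply greene_move1_back]; auto.
  - split; [apply greene_move2_fwd|apply greene_move2_back]; auto.
  - rewrite IH; tauto.
  - rewrite IH1, IH2; tauto.
Qed.

Lemma selected_const_label (r : list X) (m : nat) :
  selected (map (fun a => (a, m)) r) = label_weight m * length r.
Proof.
  unfold selected, label_weight. induction r as [|a r IH]; simpl; [lia|].
  destruct (m =? 0); simpl; lia.
Qed.

Fixpoint row_labelling (n : nat) (t : list (list X)) : list (X * nat) :=
  match t with
  | [] => []
  | r :: t' => row_labelling (S n) t' ++ map (fun a => (a, if n <? k then S n else 0)) r
  end.

Lemma row_labelling_reading n t : map fst (row_labelling n t) = reading t.
Proof.
  revert n; induction t as [|r t IH]; intros n; simpl; auto.
  rewrite reading_cons, map_app, IH, map_map. simpl. rewrite map_id. auto.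
Qed.

Lemma row_labelling_labels n t q : In q (row_labelling n t) ->
  (snd q = 0 \/ n < snd q) /\ snd q <= k.
Proof.
  revert n; induction t as [|r t IH]; intros n H; simpl in H; [tauto|].
  apply in_app_or in H as [H|H].
  - apply IH in H. lia.
  - apply in_map_iff in H as (a & <- & _). simpl.
    destruct (n <? k) eqn:E; [apply Nat.ltb_lt in E|]; lia.
Qed.

Lemma row_labelling_chain_family n t : tableau t -> chain_family (row_labelling n t).
Proof.
  revert n; induction t as [|r t IH]; intros n Hv; simpl; [split; constructor|].
  destruct Hv as (H1 & H2 & H3). destruct (IH (S n) H3) as [G1 G2]. split.
  - apply FOP_app. repeat split; auto.
    + eapply FOP_map; [|exact H1]. intros a b Hab. unfold same_chain; simpl. auto.
    + intros q q' Hq Hq'. apply row_labelling_labels in Hq.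
      apply in_map_iff in Hq' as (a & <- & _).
      unfold same_chain; simpl. intros E N. destruct (n <? k); lia.
  - apply Forall_app. split; auto. apply Forall_forall. intros q Hq.
    apply in_map_iff in Hq as (a & <- & _). simpl.
    destruct (n <? k) eqn:E; [apply Nat.ltb_lt in E|]; lia.
Qed.

Lemma row_labelling_selected n t :
  selected (row_labelling n t) = partsum (k - n) (map (@length X) t).
Proof.
  revert n; induction t as [|r t IH]; intros n; simpl; [rewrite partsum_nil; auto|].
  rewrite selected_app, IH, selected_const_label.
  destruct (n <? k) eqn:E.
  - apply Nat.ltb_lt in E. replace (k - n) with (S (k - S n)) by lia.
    rewrite partsum_cons, label_weight_nonzero by lia. lia.
  - apply Nat.ltb_ge in E. replace (k - n) with 0 by lia. replace (k - S n) with 0 by lia.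
    reflexivity.
Qed.

(* Lower bound: the first [k] rows of a tableau are [k] disjoint chains. *)
Lemma greene_tableau_rows t : tableau t -> greene (reading t) (partsum k (map (@length X) t)).
Proof.
  intros Hv. exists (row_labelling 0 t). split; [apply row_labelling_reading|].
  split; [apply row_labelling_chain_family; auto|].
  rewrite row_labelling_selected, Nat.sub_0_r. auto.
Qed.

Definition first_column (t : list (list X)) : list X := concat (rev (map (firstn 1) t)).

Lemma first_column_cons r t : first_column (r :: t) = first_column t ++ firstn 1 r.
Proof. unfold first_column. rewrite map_cons, concat_rev_cons. reflexivity. Qed.

Lemma tableau_empty_row t : tableau ([] :: t) -> Forall (fun r => r = []) t.
Proof.
  induction t as [|r t IH]; intros H; constructor.
  - destruct H as (_ & H & _). destruct r; simpl in H; auto; contradiction.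
  - apply IH. destruct H as (_ & H & H'). destruct r; simpl in H; [|contradiction]. exact H'.
Qed.

Lemma first_column_empty t : Forall (fun r => r = []) t -> first_column t = [].
Proof. induction 1; auto. rewrite first_column_cons, IHForall. subst; auto. Qed.

Lemma tableau_tl t : tableau t -> tableau (map (@tl X) t).
Proof.
  induction t as [|r t IH]; simpl; auto. intros (H1 & H2 & H3). repeat split; auto.
  - eapply subseq_FOP; [apply subseq_tl|exact H1].
  - destruct t as [|r2 t]; simpl in *; auto. destruct r2, r; simpl in *; tauto.
Qed.

Lemma first_column_below t : forall r, tableau (r :: t) ->
  forall a b, In a (first_column t) -> In b (firstn 1 r) -> ~ row_le a b.
Proof.
  induction t as [|r2 t IH]; intros r Hv a b Ha Hb; [simpl in Ha; contradiction|].
  destruct Hv as (H1 & H2 & H3). rewrite first_column_cons in Ha.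
  apply in_app_or in Ha as [Ha|Ha].
  - destruct r2 as [|b2 r2].
    + rewrite (first_column_empty _ (tableau_empty_row _ H3)) in Ha. contradiction.
    + destruct r as [|b1 r]; [contradiction|]. simpl in Hb, H2. destruct Hb as [<-|[]].
      apply (not_row_le_trans a b2 b1); [|tauto]. apply (IH (b2 :: r2) H3 a b2); simpl; auto.
  - destruct r2 as [|b2 r2]; [contradiction|]. destruct r as [|b1 r]; [contradiction|].
    simpl in Ha, Hb, H2. destruct Ha as [<-|[]]. destruct Hb as [<-|[]]. tauto.
Qed.

Lemma first_column_antichain t : tableau t -> ForallOrdPairs (fun a b => ~ row_le a b) (first_column t).
Proof.
  induction t as [|r t IH]; intros Hv; [constructor|]. rewrite first_column_cons.
  apply FOP_app. split; [apply IH, Hv|split].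
  - destruct r; simpl; repeat constructor.
  - intros a b Ha Hb. eapply first_column_below; eauto.
Qed.

Lemma partsum_first_column t : tableau t -> forall m,
  partsum m (map (fun r => length (firstn 1 r)) t) = min m (length (first_column t)).
Proof.
  induction t as [|r t IH]; intros Hv m; [cbn [map]; rewrite partsum_nil; simpl; lia|].
  rewrite first_column_cons, length_app.
  destruct r as [|a r].
  - assert (HE := tableau_empty_row _ Hv). rewrite (first_column_empty _ HE). simpl length.
    rewrite Nat.min_0_r. apply partsum_zeros. constructor; [reflexivity|].
    apply Forall_map. eapply Forall_impl; [|exact HE]. intros r ->; reflexivity.
  - destruct m; auto. cbn [map]. rewrite partsum_cons, IH by apply Hv. simpl length. lia.
Qed.

Lemma selected_le_length (l : list (X * nat)) : selected l <= length l.
Proof. unfold selected. apply filter_length_le. Qed.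

Lemma nonzero_labels_nodup (l : list (X * nat)) :
  ForallOrdPairs (fun p q => snd p = snd q -> snd p = 0) l ->
  NoDup (filter (fun n => negb (n =? 0)) (map snd l)).
Proof.
  induction 1 as [|q l H1 H2 IH]; simpl; [constructor|].
  destruct (snd q =? 0) eqn:E; simpl; auto. constructor; auto.
  intros Hin. apply filter_In in Hin as [Hin _]. apply in_map_iff in Hin as (q' & E1 & Hq').
  rewrite Forall_forall in H1. apply Nat.eqb_neq in E. apply E, (H1 q' Hq'); auto.
Qed.

(* In a chain family whose letters pairwise lie on no common chain, the nonzero
   labels are distinct, hence at most [k] letters are selected. *)
Lemma selected_antichain (l : list (X * nat)) :
  chain_family l -> ForallOrdPairs (fun a b => ~ row_le a b) (map fst l) -> selected l <= k.
Proof.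
  intros [G1 G2] Hanti. apply FOP_map_inv in Hanti.
  assert (Hnd := nonzero_labels_nodup l).
  replace (selected l) with (length (filter (fun n => negb (n =? 0)) (map snd l)))
    by (unfold selected; rewrite filter_map_swap, length_map; reflexivity).
  rewrite <- (length_seq k 1). apply NoDup_incl_length.
  - apply Hnd. eapply FOP_combine; [|exact G1|exact Hanti].
    unfold same_chain. intros p q P1 P2 E. destruct (Nat.eq_dec (snd p) 0); auto.
    exfalso. auto.
  - intros x Hx. apply filter_In in Hx as [Hx Hn]. apply in_map_iff in Hx as (q & <- & Hq).
    rewrite Forall_forall in G2. specialize (G2 q Hq). apply in_seq.
    destruct (snd q =? 0) eqn:E; [discriminate|]. apply Nat.eqb_neq in E. lia.
Qed.

Lemma chain_family_subseq l l' : subseq l l' -> chain_family l' -> chain_family l.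
Proof.
  intros Hs [G1 G2]. split; [eapply subseq_FOP; eauto|].
  rewrite Forall_forall in *. intros x Hx. apply G2. eapply subseq_incl; eauto.
Qed.

Lemma labelling_rows t (lw : list (X * nat)) : map fst lw = reading t ->
  exists B, map (map fst) B = t /\ lw = concat (rev B).
Proof.
  revert lw; induction t as [|r t IH]; intros lw H.
  - exists []. split; auto. apply map_eq_nil in H; auto.
  - rewrite reading_cons in H. apply map_eq_app in H as (l1 & l2 & -> & H1 & H2).
    destruct (IH _ H1) as (B & HB & ->). exists (l2 :: B). split; [simpl; congruence|].
    rewrite concat_rev_cons; auto.
Qed.

Lemma selected_columns (B : list (list (X * nat))) : selected (concat (rev B)) =
  selected (concat (rev (map (@tl _) B))) + selected (concat (rev (map (firstn 1) B))).
Proof.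
  induction B as [|b B IH]; auto. rewrite !map_cons, !concat_rev_cons, !selected_app, IH.
  destruct b as [|q b]; unfold selected; simpl; [lia|]. destruct (snd q =? 0); simpl; lia.
Qed.

Lemma length_reading_columns t :
  length (reading t) = length (reading (map (@tl X) t)) + length (first_column t).
Proof.
  induction t as [|r t IH]; auto.
  rewrite map_cons, first_column_cons, !reading_cons, !length_app, IH.
  destruct r; simpl; lia.
Qed.

Lemma reading_empty_column t : first_column t = [] -> reading t = [].
Proof.
  induction t as [|r t IH]; auto. rewrite first_column_cons, reading_cons.
  intros H. apply app_eq_nil in H as [H1 H2]. destruct r; [|discriminate].
  rewrite IH; auto.
Qed.

(* Upper bound, by peeling off the first column: a chain family meets the
   first column (an antichain) in at most [min k (column length)] letters. *)
Lemma selected_tableau_bound n : forall t lw, length (reading t) <= n -> tableau t ->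
  map fst lw = reading t -> chain_family lw -> selected lw <= partsum k (map (@length X) t).
Proof.
  induction n as [|n IH]; intros t lw Hn Hv Hm Hg.
  - assert (length lw = 0) by (rewrite <- (length_map fst), Hm; lia).
    pose proof (selected_le_length lw). lia.
  - destruct (first_column t) as [|c col] eqn:Hcol.
    + rewrite reading_empty_column in Hm by auto. apply map_eq_nil in Hm as ->. apply Nat.le_0_l.
    + destruct (labelling_rows t lw Hm) as (B & HB & ->).
      rewrite selected_columns.
      assert (E : map (@length X) t = map (fun r => length (tl r) + length (firstn 1 r)) t).
      { apply map_ext. intros [|a r]; simpl; lia. }
      rewrite E, partsum_add, partsum_first_column, Hcol by auto. rewrite <- Hcol.
      apply Nat.add_le_mono.
      * rewrite <- (map_map (@tl X) (@length X)). apply IH.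
        -- pose proof (length_reading_columns t). rewrite Hcol in *. simpl in *. lia.
        -- apply tableau_tl; auto.
        -- unfold reading. rewrite map_concat_rev, <- HB, !map_map. f_equal. f_equal.
           apply map_ext. intros [|a r]; reflexivity.
        -- eapply chain_family_subseq; [apply subseq_concat_rev, subseq_tl|exact Hg].
      * assert (Hfc : map fst (concat (rev (map (firstn 1) B))) = first_column t).
        { unfold first_column. rewrite map_concat_rev, <- HB, !map_map. f_equal. f_equal.
          apply map_ext. intros; symmetry; apply firstn_map. }
        apply Nat.min_glb.
        -- apply selected_antichain.
           ++ eapply chain_family_subseq; [apply subseq_concat_rev, subseq_firstn1|exact Hg].
           ++ rewrite Hfc. apply first_column_antichain; auto.
        -- rewrite <- Hfc, length_map. apply selected_le_length.
Qed.

Lemma greene_tableau_max t s : tableau t -> greene (reading t) s ->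
  s <= partsum k (map (@length X) t).
Proof.
  intros Hv (lw & Hm & Hg & Hs). eapply Nat.le_trans; [exact Hs|].
  eapply selected_tableau_bound; eauto.
Qed.

End GeneralisedRSK.

Section LinearOrder.
Variable X : Type.
Variable lt : X -> X -> bool.
Variable strict : X -> bool.
Hypothesis Hlt : strict_linear_order lt.

Lemma row_le_iff a b : row_le X lt strict a b <-> lt a b = true \/ (a = b /\ strict b = true).
Proof.
  destruct Hlt as (Hirr & Htr & Htot). unfold row_le, bumps.
  destruct (strict b) eqn:Sb.
  - split.
    + intros E. destruct (classic (a = b)) as [->|Nab]; auto.
      destruct (Htot a b Nab) as [|E2]; auto. congruence.
    + intros [E|[-> _]]; [|apply Hirr]. destruct (lt b a) eqn:E2; auto.
      specialize (Htr a b a E E2). rewrite Hirr in Htr. congruence.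
  - destruct (lt a b); simpl; intuition congruence.
Qed.

Lemma linear_row_le_trans a b c :
  row_le X lt strict a b -> row_le X lt strict b c -> row_le X lt strict a c.
Proof.
  destruct Hlt as (Hirr & Htr & Htot). rewrite !row_le_iff.
  intros [E1|[-> S1]] [E2|[-> S2]]; eauto.
Qed.

Lemma linear_not_row_le_trans a b c :
  ~ row_le X lt strict a b -> ~ row_le X lt strict b c -> ~ row_le X lt strict a c.
Proof.
  pose proof Hlt as (Hirr & Htr & Htot). rewrite !row_le_iff.
  intros N1 N2 [E|[Eac S]].
  - destruct (classic (a = b)) as [<-|Nab]; [apply N2; auto|].
    destruct (Htot a b Nab) as [E1|E1]; [apply N1; auto|].
    destruct (classic (b = c)) as [<-|Nbc].
    + assert (E4 := Htr _ _ _ E E1). rewrite Hirr in E4; congruence.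
    + destruct (Htot b c Nbc) as [E2|E2]; [apply N2; auto|].
      assert (E4 := Htr _ _ _ E (Htr _ _ _ E2 E1)). rewrite Hirr in E4; congruence.
  - subst c. destruct (classic (a = b)) as [<-|Nab]; [apply N1; auto|].
    destruct (Htot a b Nab) as [E1|E1]; [apply N1; auto|]. apply N2; auto.
Qed.

Lemma greene_shape k w : greene X lt strict k w (partsum k (shape lt strict w)).
Proof.
  pose proof (tableau_RSK X lt strict linear_row_le_trans linear_not_row_le_trans w) as Ht.
  apply (knuth_greene X lt strict linear_row_le_trans linear_not_row_le_trans k _ w
           (knuth_reading_RSK X lt strict linear_row_le_trans linear_not_row_le_trans w)).
  apply greene_tableau_rows; auto.
Qed.

Lemma greene_shape_max k w s : greene X lt strict k w s -> s <= partsum k (shape lt strict w).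
Proof.
  intros H.
  pose proof (tableau_RSK X lt strict linear_row_le_trans linear_not_row_le_trans w) as Ht.
  apply (greene_tableau_max X lt strict linear_not_row_le_trans); auto.
  apply (knuth_greene X lt strict linear_row_le_trans linear_not_row_le_trans k _ w
           (knuth_reading_RSK X lt strict linear_row_le_trans linear_not_row_le_trans w)).
  exact H.
Qed.
End LinearOrder.

Lemma greene_map X lt strict Y lt' strict' (phi : X -> Y)
  (Hphi : forall a b, row_le X lt strict a b -> row_le Y lt' strict' (phi a) (phi b)) k w s :
  greene X lt strict k w s -> greene Y lt' strict' k (map phi w) s.
Proof.
  intros (lw & Hm & [G1 G2] & Hs). exists (map (fun p => (phi (fst p), snd p)) lw).
  split; [rewrite map_map, <- Hm, map_map; auto|]. split; [split|].
  - eapply FOP_map; [|exact G1]. unfold same_chain; simpl. auto.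
  - apply Forall_map. eapply Forall_impl; [|exact G2]. simpl; auto.
  - unfold selected in *. rewrite filter_map_swap, length_map. exact Hs.
Qed.

Theorem partsum_shape_mono X lt strict Y lt' strict'
  (H1 : strict_linear_order lt) (H2 : strict_linear_order lt') (phi : X -> Y)
  (Hphi : forall a b, row_le X lt strict a b -> row_le Y lt' strict' (phi a) (phi b)) k w :
  partsum k (shape lt strict w) <= partsum k (shape lt' strict' (map phi w)).
Proof.
  apply (greene_shape_max Y lt' strict' H2).
  apply (greene_map X lt strict Y lt' strict' phi Hphi).
  apply greene_shape; auto.
Qed.

Section Pullback.
Variables Y Z : Type.
Variable f : Y -> Z.
Variable ltZ : Z -> Z -> bool.
Variable strictZ : Z -> bool.

Definition pullback_lt (a b : Y) : bool := ltZ (f a) (f b).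
Definition pullback_strict (a : Y) : bool := strictZ (f a).

Lemma row_ins_map x r : row_ins Z ltZ strictZ (f x) (map f r) =
  (option_map f (fst (row_ins Y pullback_lt pullback_strict x r)),
   map f (snd (row_ins Y pullback_lt pullback_strict x r))).
Proof.
  induction r as [|e r IH]; simpl; auto.
  destruct (row_ins Y pullback_lt pullback_strict x r) as [o l]. simpl in IH. rewrite IH.
  change (bumps Z ltZ strictZ (f x) (f e)) with (bumps Y pullback_lt pullback_strict x e).
  destruct (bumps Y pullback_lt pullback_strict x e); simpl; auto.
Qed.

Lemma tab_ins_map x t : tab_ins Z ltZ strictZ (f x) (map (map f) t) =
  map (map f) (tab_ins Y pullback_lt pullback_strict x t).
Proof.
  revert x; induction t as [|r t IH]; intros x; simpl; auto.
  rewrite row_ins_map. destruct (row_ins Y pullback_lt pullback_strict x r) as [[y|] r'];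
  simpl; auto. rewrite IH; auto.
Qed.

Lemma shape_map w : shape ltZ strictZ (map f w) = shape pullback_lt pullback_strict w.
Proof.
  unfold shape, RSK.
  assert (Hfold : forall t,
    fold_left (fun t x => tab_ins Z ltZ strictZ x t) (map f w) (map (map f) t) =
    map (map f) (fold_left (fun t x => tab_ins Y pullback_lt pullback_strict x t) w t)).
  { induction w as [|x w IH]; intros t; simpl; auto. rewrite tab_ins_map; auto. }
  specialize (Hfold []). simpl in Hfold. rewrite Hfold, map_map. apply map_ext. intros; apply length_map.
Qed.
End Pullback.

Lemma decb_eq (P : Prop) (b : bool) : (P <-> b = true) -> decb P = b.
Proof.
  intros H. unfold decb. destruct (excluded_middle_informative P) as [HP|HP].
  - symmetry; apply H; auto.
  - destruct b; auto. exfalso; apply HP, H; auto.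
Qed.

Section Amalgamation.
Variable p : letter -> letter -> bool.
Variable I : letter -> bool.
Hypothesis Hp : strict_linear_order p.
Hypothesis HI : is_interval p I.
Variable c0 : letter.
Hypothesis Hc0 : I c0 = true.

(* The genuine letters of the amalgamated alphabet: the new letter [z = None]
   and the letters outside [I].  On them [star_lt] is the order of [p] with
   [z] standing at the place of the representative [c0] of [I]. *)
Definition star_letter (o : option letter) : Prop :=
  match o with None => True | Some a => I a = false end.

Definition star_alphabet : Type := {o : option letter | star_letter o}.

Definition representative (y : star_alphabet) : letter :=
  match proj1_sig y with None => c0 | Some a => a end.

Lemma above_interval b : I b = false ->
  ((exists c, I c = true /\ p c b = true) <-> p c0 b = true).
Proof.
  destruct Hp as (Hirr & Htr & Htot). intros Hb. split; [|intros; exists c0; auto].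
  intros (c & Hc & Hcb). destruct (classic (c0 = b)) as [<-|N]; [congruence|].
  destruct (Htot c0 b N) as [|E]; auto. rewrite (HI c b c0 Hc Hc0 Hcb E) in Hb. discriminate.
Qed.

Lemma below_interval a : I a = false ->
  ((exists c, I c = true /\ p a c = true) <-> p a c0 = true).
Proof.
  destruct Hp as (Hirr & Htr & Htot). intros Ha. split; [|intros; exists c0; auto].
  intros (c & Hc & Hac). destruct (classic (a = c0)) as [->|N]; [congruence|].
  destruct (Htot a c0 N) as [|E]; auto. rewrite (HI c0 a c Hc0 Hc E Hac) in Ha. discriminate.
Qed.

Lemma star_lt_representative (y z : star_alphabet) :
  star_lt p I (proj1_sig y) (proj1_sig z) = p (representative y) (representative z).
Proof.
  destruct y as [[a|] Ha], z as [[b|] Hb]; unfold representative; simpl in *; auto.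
  - apply decb_eq, below_interval; auto.
  - apply decb_eq, above_interval; auto.
  - destruct Hp as (Hirr & _ & _). symmetry; apply Hirr.
Qed.

Lemma representative_inj (y z : star_alphabet) : representative y = representative z -> y = z.
Proof.
  destruct y as [[a|] Ha], z as [[b|] Hb]; unfold representative; simpl in *; intros E.
  - subst. f_equal. apply UIP_dec, bool_dec.
  - subst. congruence.
  - subst. congruence.
  - destruct Ha, Hb; auto.
Qed.

Definition star_alphabet_lt : star_alphabet -> star_alphabet -> bool :=
  pullback_lt star_alphabet (option letter) (@proj1_sig _ _) (star_lt p I).
Definition star_alphabet_strict : star_alphabet -> bool :=
  pullback_strict star_alphabet (option letter) (@proj1_sig _ _) star_strict.

Lemma star_linear_order : strict_linear_order star_alphabet_lt.
Proof.
  destruct Hp as (Hirr & Htr & Htot). unfold star_alphabet_lt, pullback_lt.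
  split; [|split]; intros; rewrite ?star_lt_representative in *; eauto.
  destruct (Htot (representative a) (representative b)) as [E|E]; auto.
  intros E; apply H, representative_inj; auto.
Qed.

Lemma star_letter_amalgamate a : star_letter (if I a then None else Some a).
Proof. destruct (I a) eqn:E; simpl; auto. Qed.

Definition amalgamate (a : letter) : star_alphabet := exist _ _ (star_letter_amalgamate a).

Lemma representative_amalgamate a : representative (amalgamate a) = if I a then c0 else a.
Proof. unfold representative, amalgamate; simpl. destruct (I a); auto. Qed.

(* Amalgamation preserves [row_le]: two letters of [I] both become the
   strictly-bumping letter [z], which may be repeated along a row. *)
Lemma amalgamate_row_le a b : row_le letter p isLe a b ->
  row_le star_alphabet star_alphabet_lt star_alphabet_strict (amalgamate a) (amalgamate b).
Proof.
  rewrite (row_le_iff _ _ _ Hp), (row_le_iff _ _ _ star_linear_order).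
  unfold star_alphabet_lt, pullback_lt, star_alphabet_strict, pullback_strict.
  rewrite star_lt_representative, !representative_amalgamate.
  destruct Hp as (Hirr & Htr & Htot).
  destruct (I a) eqn:Ia, (I b) eqn:Ib.
  - intros _. right. split; [|unfold amalgamate; simpl; rewrite Ib; auto].
    apply representative_inj. rewrite !representative_amalgamate, Ia, Ib; auto.
  - intros [E|[-> _]]; [|congruence]. left. apply above_interval; eauto.
  - intros [E|[-> _]]; [|congruence]. left. apply below_interval; eauto.
  - intros [E|[-> S]]; auto. right. split; auto. unfold amalgamate; simpl. rewrite Ib; auto.
Qed.
End Amalgamation.

Theorem lemma2 (p : letter -> letter -> bool) (I : letter -> bool)
  (Hp : admissible p) (HI : is_interval p I) (HIne : exists a, I a = true)
  (w : list letter) (k : nat) (Hk : (1 <= k)%nat) :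
  (partsum k (shape p isLe w)
     <= partsum k (shape (star_lt p I) star_strict (star_word I w)))%nat.
Proof.
  destruct Hp as [Hlin _]. destruct HIne as [c0 Hc0].
  (* [w*] is [amalgamate] followed by the inclusion of the genuine letters. *)
  replace (star_word I w) with (map (@proj1_sig _ _) (map (amalgamate I) w))
    by (unfold star_word; rewrite map_map; reflexivity).
  rewrite shape_map.
  apply (partsum_shape_mono _ p isLe _ (star_alphabet_lt p I) (star_alphabet_strict I) Hlin
           (star_linear_order p I Hlin HI c0 Hc0)).
  exact (amalgamate_row_le p I Hlin HI c0 Hc0).
Qed.
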